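(* Let $G\le S_n$ be fusion controlled and $C$ a connected component of $\widetilde P_0(G)$, and let $\mathcal T(C)$ be the set of types of vertices of $C$. For $T\in\mathcal T(G_0)$ let $k(T)$ be the number of vertices of $\widetilde P_0(G)$ of type $T$. Then: (i) for all $T,T'\in\mathcal T(C)$, $k(T)/k_C(T)=k(T')/k_C(T')$; (ii) $C$ is isomorphic to its image $\widetilde t(C)$ iff there exists $T\in\mathcal T(C)$ with $k_C(T)=1$ and $k(T)=k(T')$ for every $T'\in\mathcal T(C)$; (iii) if $C$ contains all vertices of $\widetilde P_0(G)$ of some type $T$, then $C$ contains all vertices of type $T'$ for every $T'\in\mathcal T(C)$; (iv) if some $T\in\mathcal T(C)$ satisfies $k_C(T)=k(T)>1$, then $C\not\cong\widetilde t(C)$.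
   Context: $G_0=G\setminus\{1\}$; $[x]=\{y:\langle y\rangle=\langle x\rangle\}$; $\widetilde P_0(G)$: vertex set $\{[x]:x\in G_0\}$, distinct $[x],[y]$ adjacent iff some representatives are one a positive power of the other. For $\psi\in S_n$, $T_\psi$ is the partition of $n$ given by orbit lengths of $\langle\psi\rangle$; the type of $[\psi]$ is $T_\psi$. For $T=[m_1^{t_1},\dots,m_k^{t_k}]$, $T^a=[(m_i/\gcd(a,m_i))^{t_i\gcd(a,m_i)}]_i$. $\mathcal T(G_0)=\{T_\psi:\psi\in G_0\}$; $P_0(\mathcal T(G))$: vertex set $\mathcal T(G_0)$, distinct $T,T'$ adjacent iff one is a power of the other. $\widetilde t(C)$ is the subgraph of $P_0(\mathcal T(G))$ with vertex set $\mathcal T(C)$ and edges $\{T_\psi,T_\varphi\}$ for edges $\{[\psi],[\varphi]\}$ of $C$. $k_C(T)$ is the number of vertices of $C$ of type $T$. $G$ is fusion controlled if for all $\psi\in G$, $x\in S_n$ with $x^{-1}\psi x\in G$ there is $y\in N_{S_n}(G)$ with $x^{-1}\psi x=y^{-1}\psi y$. *)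

From HB Require Import structures.
From mathcomp Require Import all_boot all_order all_algebra all_fingroup.
Set Implicit Arguments. Unset Strict Implicit. Unset Printing Implicit Defensive.
Import GRing.Theory.

Local Open Scope group_scope.

(* Permutations of {0,...,n-1} ; S_n is the full group [set: perm n]. *)
Notation perm n := {perm 'I_n}.

Definition gcls (n : nat) (x : perm n) : {set perm n} :=
  [set y | <[y]> == <[x]>].

(* vertices of P~_0(G): the classes [x] with x in G_0 = G \ {1} *)
Definition isvert (n : nat) (G : {group perm n}) (V : {set perm n}) : bool :=
  [exists x in G, (x != 1) && (V == gcls x)].

Definition padj (n : nat) (G : {group perm n}) (V W : {set perm n}) : bool :=
  [&& isvert G V, isvert G W, V != W &
    [exists x in V, exists y in W,
      [exists k : 'I_(#|G|).+1, (0 < val k) && ((y == x ^+ k) || (x == y ^+ k))]]].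

Definition comp (n : nat) (G : {group perm n}) (V0 : {set perm n})
  : {set {set perm n}} := [set W | connect (padj G) V0 W].

Definition is_component (n : nat) (G : {group perm n}) (C : {set {set perm n}}) :=
  exists2 V0, isvert G V0 & C = comp G V0.

(* the type T_psi: partition of n given by the orbit lengths of <psi>,
   written as a non-increasing list *)
Definition ptype (n : nat) (psi : perm n) : seq nat :=
  sort geq (map (fun X : {set 'I_n} => #|X|) (enum (porbits psi))).

Definition has_type (n : nat) (V : {set perm n}) (T : seq nat) : bool :=
  [exists psi in V, ptype psi == T].

Definition in_types (n : nat) (C : {set {set perm n}}) (T : seq nat) : Prop :=
  exists2 V, V \in C & has_type V T.

Definition kG (n : nat) (G : {group perm n}) (T : seq nat) : nat :=
  #|[set V | isvert G V & has_type V T]|.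

Definition kC (n : nat) (C : {set {set perm n}}) (T : seq nat) : nat :=
  #|[set V in C | has_type V T]|.

Definition tpow (T : seq nat) (a : nat) : seq nat :=
  sort geq (flatten [seq nseq (gcdn a m) (m %/ gcdn a m) | m <- T]).

Definition tadj (T T' : seq nat) : Prop :=
  T <> T' /\ exists2 a, 0 < a & (T' = tpow T a \/ T = tpow T' a).

Definition tCedge (n : nat) (G : {group perm n}) (C : {set {set perm n}})
  (T T' : seq nat) : Prop :=
  tadj T T' /\
  exists V, exists W, [/\ V \in C, W \in C, padj G V W, has_type V T & has_type W T'].

(* C (as induced subgraph of P~_0(G)) is isomorphic to the graph t~(C) *)
Definition iso_tC (n : nat) (G : {group perm n}) (C : {set {set perm n}}) : Prop :=
  exists f : {set perm n} -> seq nat,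
    [/\ {in C &, injective f},
        (forall V, V \in C -> in_types C (f V)),
        (forall T, in_types C T -> exists2 V, V \in C & f V = T) &
        {in C &, forall V W, padj G V W <-> tCedge G C (f V) (f W)}].

Definition fusion_controlled (n : nat) (G : {group perm n}) : Prop :=
  forall psi x : perm n, psi \in G -> psi ^ x \in G ->
    exists2 y, y \in 'N(G) & psi ^ x = psi ^ y.

From Pilot Require Import Defs.
From HB Require Import structures.
From mathcomp Require Import all_boot all_order all_algebra all_fingroup.
Set Implicit Arguments. Unset Strict Implicit. Unset Printing Implicit Defensive.
Import GRing.Theory Num.Theory.

(* The normaliser N of G acts by conjugation on the vertices of the power
   graph, preserving adjacency and types.  Permutations of equal cycle type are
   conjugate in S_n, so fusion control makes N transitive on the vertices of
   each type T; likewise the stabiliser N_C of the component C is transitive on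
   the vertices of type T in C, since an element of N moving one vertex of C
   into C stabilises C.  Both orbits have the same point stabiliser, so
   orbit-stabiliser gives k(T) * |N_C| = k_C(T) * |N| for every type T of C.
   The four claims follow from this identity and from the fact that C is
   isomorphic to its type graph exactly when the type map is injective on C,
   i.e. when k_C(T) = 1 for every type T of C. *)

Lemma dvdn_mul_gcdl m k j : 0 < m -> (m %| k * j) = (m %/ gcdn k m %| j).
Proof.
move=> m_gt0; have g_gt0 : 0 < gcdn k m by rewrite gcdn_gt0 m_gt0 orbT.
have -> : (m %| k * j) = (m %| gcdn k m * j).
  by rewrite muln_gcdl dvdn_gcd (dvdn_mulr _ (dvdnn m)) andbT.
by rewrite -{1}(divnK (dvdn_gcdr k m)) (mulnC (gcdn k m)) dvdn_pmul2r.
Qed.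

Section PermOrbits.
Variables (T : finType) (s : {perm T}).
Local Open Scope group_scope.

Lemma porbit_fconnect x y : (y \in porbit s x) = fconnect s x y.
Proof.
apply/porbitP/idP => [[i ->]|sxy]; first by rewrite permX fconnect_iter.
by exists (findex s x y); rewrite permX iter_findex.
Qed.

Lemma card_porbit_order x : #|porbit s x| = fingraph.order s x.
Proof. by apply: eq_card => y; rewrite porbit_fconnect. Qed.

Lemma expg_porbit_mod j x : (s ^+ j) x = (s ^+ (j %% #|porbit s x|)) x.
Proof.
rewrite !permX {1}(divn_eq j #|porbit s x|) addnC iterD; congr (iter _ s _).
by elim: (j %/ _) => //= q IHq; rewrite mulSn iterD IHq iter_porbit.
Qed.

Lemma expg_fix_dvdn j x : ((s ^+ j) x == x) = (#|porbit s x| %| j).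
Proof.
have m_gt0 : 0 < #|porbit s x| by rewrite lt0n card_porbit_neq0.
rewrite expg_porbit_mod permX eq_sym -(findex_eq0 s) findex_iter /dvdn //.
by rewrite -card_porbit_order ltn_pmod.
Qed.

Lemma sum_card_porbits (h : pred nat) :
  \sum_(X in porbits s | h #|X|) #|X| = #|[set z | h #|porbit s z|]|.
Proof.
rewrite -sum1_card (partition_big (porbit s) (mem (porbits s))) /=; last first.
  by move=> z _; apply: imset_f.
rewrite big_mkcondr /=; apply: eq_bigr => _ /imsetP [x _ ->].
have orbitE z : z \in porbit s x -> porbit s z = porbit s x.
  by rewrite -eq_porbit_mem => /eqP.
case: ifP => hx.
  rewrite -sum1_card; apply: eq_bigl => z; rewrite inE eq_porbit_mem andbC.
  by case: (boolP (z \in _)) => // /orbitE ->; rewrite hx.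
rewrite big_pred0 // => z; rewrite inE eq_porbit_mem andbC.
by case: (boolP (z \in _)) => // /orbitE ->; rewrite hx.
Qed.
End PermOrbits.

Lemma card_porbit_expg (T : finType) (s : {perm T}) k x :
  #|porbit (s ^+ k)%g x| = #|porbit s x| %/ gcdn k #|porbit s x|.
Proof.
have m_gt0 : 0 < #|porbit s x| by rewrite lt0n card_porbit_neq0.
have dvdE j : (#|porbit (s ^+ k)%g x| %| j) = (#|porbit s x| %/ gcdn k #|porbit s x| %| j).
  by rewrite -expg_fix_dvdn -expgM expg_fix_dvdn dvdn_mul_gcdl.
by apply/eqP; rewrite eqn_dvd -dvdE dvdnn dvdE dvdnn.
Qed.

Definition porbit_sizes (T : finType) (s : {perm T}) : seq nat :=
  [seq #|X| | X : {set T} <- enum (porbits s)].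

Section PorbitSizes.
Variables (T : finType) (s : {perm T}).

Lemma porbit_sizes_neq0 : 0 \notin porbit_sizes s.
Proof.
apply/negP => /mapP [_ /[!mem_enum] /imsetP [x _ ->]] /esym/eqP.
by rewrite (negbTE (card_porbit_neq0 s x)).
Qed.

Lemma count_porbit_sizes v :
  (v * count_mem v (porbit_sizes s))%N = #|[set z | #|porbit s z| == v]|.
Proof.
rewrite count_map -sum1_count big_enum_cond big_distrr /= -(sum_card_porbits s (fun m => m == v)).
by apply: eq_bigr => X /andP [_ /eqP ->]; rewrite muln1.
Qed.

End PorbitSizes.

Lemma sort_eq_ptype n (s : {perm 'I_n}) L :
    0 \notin L -> (forall v, (v * count_mem v L)%N = #|[set z | #|porbit s z| == v]|) ->
  sort geq L = ptype s.
Proof.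
move=> L0 countL; apply/perm_sortP.
- by move=> x y; apply: leq_total.
- by move=> x y z /[swap]; apply: leq_trans.
- by move=> x y /andP [yx xy]; apply/eqP; rewrite eqn_leq; apply/andP.
apply/allP => -[|v] _; apply/eqP.
  by rewrite !(count_memPn _) // porbit_sizes_neq0.
by apply/eqP; rewrite -(eqn_pmul2l (ltn0Sn v)) countL count_porbit_sizes.
Qed.

Lemma porbitJ (T : finType) (s y : {perm T}) z :
  porbit (s ^ y)%g (y z) = [set y w | w in porbit s z].
Proof.
apply/setP => w; apply/porbitP/imsetP => [[i ->]|[_ /porbitP [i ->] ->]].
  by exists ((s ^+ i)%g z); [apply: mem_porbit | rewrite -conjXg permJ].
by exists i; rewrite -conjXg permJ.
Qed.

Lemma ptypeJ n (s y : {perm 'I_n}) : ptype (s ^ y)%g = ptype s.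
Proof.
apply: sort_eq_ptype => [|v]; first exact: porbit_sizes_neq0.
rewrite count_porbit_sizes -(card_preimset _ (@perm_inj _ y)); apply: eq_card => z.
by rewrite !inE porbitJ card_imset //; apply: perm_inj.
Qed.

Lemma ptype_eq_cycle n (s t : {perm 'I_n}) : <[s]>%g = <[t]>%g -> ptype s = ptype t.
Proof.
move=> st; have Eo : porbit s =1 porbit t by move=> z; rewrite !porbit.unlock st.
by rewrite /ptype /porbits (eq_imset _ Eo).
Qed.

Lemma ptype_expg n (s : {perm 'I_n}) k : ptype (s ^+ k)%g = tpow (ptype s) k.
Proof.
have ptype_gt0 m : m \in ptype s -> 0 < m.
  by rewrite /ptype mem_sort lt0n; apply: contraTneq => ->; apply: porbit_sizes_neq0.
symmetry; apply: sort_eq_ptype => [|v].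
  apply/negP => /flattenP [_ /mapP [m /ptype_gt0 m_gt0 ->] /nseqP [/esym m0 _]].
  by move: m_gt0; rewrite -(divnK (dvdn_gcdr k m)) m0.
rewrite count_flatten sumnE big_map big_distrr /=.
rewrite big_map /ptype (perm_big _ (permEl (perm_sort geq _))) big_map big_enum /=.
transitivity (\sum_(X in porbits s | #|X| %/ gcdn k #|X| == v) #|X|).
  rewrite big_mkcondr /=; apply: eq_bigr => X _; rewrite count_nseq /=.
  by case: eqP => [<-|_]; rewrite ?muln0 // mul1n divnK ?dvdn_gcdr.
rewrite (sum_card_porbits s (fun m => m %/ gcdn k m == v)).
by apply: eq_card => z; rewrite !inE card_porbit_expg.
Qed.

Definition pick_or (T : finType) (X : {set T}) (d : T) := odflt d [pick w in X].

Lemma pick_or_mem (T : finType) (X : {set T}) d w : w \in X -> pick_or X d \in X.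
Proof. by rewrite /pick_or; case: pickP => [w' ->|X0] //=; rewrite X0. Qed.

Lemma pick_or_default (T : finType) (X : {set T}) d d' w : w \in X -> pick_or X d = pick_or X d'.
Proof. by rewrite /pick_or; case: pickP => [w' _|X0] //=; rewrite X0. Qed.

Section ConjugateOfSameCycleType.
Variables (T : finType) (s t : {perm T}).
Let by_size := relpre (fun X : {set T} => #|X|) geq.
Let orbits_s := sort by_size (enum (porbits s)).
Let orbits_t := sort by_size (enum (porbits t)).
Hypothesis sizes_eq :
  [seq #|X| | X : {set T} <- orbits_s] = [seq #|X| | X : {set T} <- orbits_t].

Let size_orbits : size orbits_s = size orbits_t.
Proof. by rewrite -(size_map (fun X : {set T} => #|X|)) sizes_eq size_map. Qed.

(* The i-th orbit of s is matched with the i-th orbit of t; inside matched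
   orbits, (s ^+ i) a is sent to (t ^+ i) b for chosen base points a and b. *)
Let idx z := index (porbit s z) orbits_s.
Let match_t z := nth set0 orbits_t (idx z).
Let base_s z := pick_or (porbit s z) z.
Let base_t z := pick_or (match_t z) z.
Let dist z := findex s (base_s z) z.
Definition conj_map z := iter (dist z) t (base_t z).

Let idx_lt z : idx z < size orbits_s.
Proof. by rewrite index_mem mem_sort mem_enum imset_f. Qed.

Let nth_orbits_s z : nth set0 orbits_s (idx z) = porbit s z.
Proof. by rewrite nth_index // mem_sort mem_enum imset_f. Qed.

Let card_match_t z : #|match_t z| = #|porbit s z|.
Proof.
have := congr1 (fun l => nth 0 l (idx z)) sizes_eq => /=.
by rewrite !(nth_map set0) -?size_orbits ?idx_lt // nth_orbits_s.
Qed.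

Let match_tE z : match_t z = porbit t (base_t z).
Proof.
have : match_t z \in porbits t by rewrite -mem_enum -(mem_sort by_size) mem_nth -?size_orbits.
case/imsetP => w _ E; rewrite /base_t E; apply/eqP.
by rewrite eq_sym eq_porbit_mem (pick_or_mem _ (porbit_id t w)).
Qed.

Let base_t_mem z : base_t z \in match_t z.
Proof. by rewrite match_tE porbit_id. Qed.

Let base_s_orbit z : porbit s (base_s z) = porbit s z.
Proof. by apply/eqP; rewrite eq_porbit_mem (pick_or_mem _ (porbit_id s z)). Qed.

Let order_base_s z : fingraph.order s (base_s z) = #|porbit s z|.
Proof. by rewrite -card_porbit_order base_s_orbit. Qed.

Let order_base_t z : fingraph.order t (base_t z) = #|porbit s z|.
Proof. by rewrite -card_porbit_order -match_tE card_match_t. Qed.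

Let iter_dist z : iter (dist z) s (base_s z) = z.
Proof. by apply: iter_findex; rewrite -porbit_fconnect base_s_orbit porbit_id. Qed.

Let dist_lt z : dist z < #|porbit s z|.
Proof. by rewrite -order_base_s findex_max // -porbit_fconnect base_s_orbit porbit_id. Qed.

Lemma conj_map_comm z : conj_map (s z) = t (conj_map z).
Proof.
have orbit_sz : porbit s (s z) = porbit s z by have := porbit_perm s 1 z; rewrite expg1.
have base_s_sz : base_s (s z) = base_s z.
  by rewrite /base_s orbit_sz; apply: pick_or_default (porbit_id s z).
have base_t_sz : base_t (s z) = base_t z.
  by rewrite /base_t /match_t /idx orbit_sz; apply: pick_or_default (base_t_mem z).
have dist_sz : dist (s z) = (dist z).+1 %% #|porbit s z|.
  rewrite /dist base_s_sz; have -> : s z = iter (dist z).+1 s (base_s z) by rewrite iterS iter_dist.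
  rewrite -permX expg_porbit_mod permX base_s_orbit findex_iter //.
  by rewrite order_base_s ltn_pmod // lt0n card_porbit_neq0.
rewrite /conj_map dist_sz base_t_sz -iterS -!permX.
by rewrite [in RHS]expg_porbit_mod -match_tE card_match_t.
Qed.

Lemma conj_map_inj : injective conj_map.
Proof.
move=> z z' E.
have orbit_conj w : porbit t (conj_map w) = match_t w.
  by rewrite match_tE; apply/eqP; rewrite eq_porbit_mem /conj_map -permX mem_porbit.
have idxE : idx z = idx z'.
  have uniq_t : uniq orbits_t by rewrite sort_uniq enum_uniq.
  apply/eqP; rewrite -(nth_uniq set0 _ _ uniq_t) -?size_orbits ?idx_lt //.
  by rewrite -/(match_t z) -/(match_t z') -!orbit_conj E.
have orbitE : porbit s z = porbit s z' by rewrite -nth_orbits_s idxE nth_orbits_s.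
have base_sE : base_s z = base_s z'.
  by rewrite /base_s orbitE; apply: pick_or_default (porbit_id s z').
have base_tE : base_t z = base_t z'.
  by rewrite /base_t /match_t idxE; apply: pick_or_default (base_t_mem z').
have distE : dist z = dist z'.
  have := dist_lt z'; rewrite -orbitE -(order_base_t z) base_tE => lt'.
  have := dist_lt z; rewrite -(order_base_t z) base_tE => lt.
  by rewrite -(findex_iter lt) -(findex_iter lt'); move: E; rewrite /conj_map base_tE => ->.
by rewrite -(iter_dist z) -(iter_dist z') base_sE distE.
Qed.

Lemma conjg_same_sizes : exists x, (s ^ x)%g = t.
Proof.
exists (perm conj_map_inj); apply/permP => w.
by rewrite -(permKV (perm conj_map_inj) w) permJ !permE conj_map_comm.
Qed.

End ConjugateOfSameCycleType.

Lemma ptype_eq_conjg n (s t : {perm 'I_n}) : ptype s = ptype t -> exists x, (s ^ x)%g = t.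
Proof. by move=> st; apply: conjg_same_sizes; rewrite -!sort_map; exact: st. Qed.

Definition vtype {n} (V : {set {perm 'I_n}}) : seq nat := ptype (repr V).

Section PowerGraph.
Variables (n : nat) (G : {group {perm 'I_n}}).
Local Open Scope group_scope.
Implicit Types (V W : {set {perm 'I_n}}) (x y : {perm 'I_n}) (T : seq nat).

Lemma isvertP V : reflect (exists2 x, x \in G & x != 1 /\ V = gcls x) (isvert G V).
Proof.
apply: (iffP existsP) => [[x /and3P [xG x1 /eqP ->]]|[x xG [x1 ->]]]; first by exists x.
by exists x; rewrite xG x1 eqxx.
Qed.

Lemma gcls_id x : x \in gcls x.
Proof. by rewrite inE. Qed.

Lemma has_type_gcls x T : has_type (gcls x) T = (ptype x == T).
Proof.
apply/existsP/eqP => [[y /andP [/[!inE] /eqP xy /eqP <-]]|<-].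
  exact: ptype_eq_cycle.
by exists x; rewrite gcls_id eqxx.
Qed.

Lemma vtype_gcls x : vtype (gcls x) = ptype x.
Proof. by have /[!inE] /eqP := mem_repr _ (gcls_id x); apply: ptype_eq_cycle. Qed.

Lemma has_type_vtype V T : isvert G V -> has_type V T = (vtype V == T).
Proof. by case/isvertP => x _ [_ ->]; rewrite has_type_gcls vtype_gcls. Qed.

Lemma vtype_mem V x : isvert G V -> x \in V -> vtype V = ptype x.
Proof. by move=> vV xV; apply/eqP; rewrite -has_type_vtype //; apply/existsP; exists x; rewrite xV eqxx. Qed.

Lemma gclsJ x y : gcls x :^ y = gcls (x ^ y).
Proof.
apply/setP => z; rewrite mem_conjg !inE !cycleJ.
by rewrite -(inj_eq (@conjsg_inj _ y)) conjsgKV.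
Qed.

Lemma isvertJ V y : y \in 'N(G) -> isvert G V -> isvert G (V :^ y).
Proof.
move=> yN /isvertP [x xG [x1 ->]]; apply/isvertP; exists (x ^ y).
  by rewrite memJ_norm.
by rewrite conjg_eq1 gclsJ.
Qed.

Lemma has_typeJ V y T : has_type V T -> has_type (V :^ y) T.
Proof.
case/existsP => x /andP [xV /eqP <-]; apply/existsP; exists (x ^ y).
by rewrite memJ_conjg xV ptypeJ eqxx.
Qed.

Lemma padjJ V W y : y \in 'N(G) -> padj G V W -> padj G (V :^ y) (W :^ y).
Proof.
move=> yN /and4P [vV vW VW /exists_inP [x xV /exists_inP [z zW /existsP [k /andP [k_gt0 xz]]]]].
apply/and4P; split; [exact: isvertJ | exact: isvertJ | by rewrite (inj_eq (@conjsg_inj _ y)) |].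
apply/exists_inP; exists (x ^ y); first by rewrite memJ_conjg.
apply/exists_inP; exists (z ^ y); first by rewrite memJ_conjg.
by apply/existsP; exists k; rewrite k_gt0 -!conjXg !(inj_eq (@conjg_inj _ y)).
Qed.

Lemma connect_padjJ V W y : y \in 'N(G) ->
  connect (padj G) V W -> connect (padj G) (V :^ y) (W :^ y).
Proof.
move=> yN /connectP [p VWp ->]; apply/connectP.
exists (map (conjugate^~ y) p); last by rewrite (last_map (conjugate^~ y)).
by apply: homo_path VWp => U U'; apply: padjJ.
Qed.

Lemma padj_connect_sym : connect_sym (padj G).
Proof.
apply: sym_connect_sym => V W; wlog suff: V W / padj G V W -> padj G W V.
  by move=> sym; apply/idP/idP; apply: sym.
move=> /and4P [vV vW VW /exists_inP [x xV /exists_inP [z zW /existsP [k /andP [k_gt0 xz]]]]].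
apply/and4P; split; rewrite 1?eq_sym //.
apply/exists_inP; exists z => //; apply/exists_inP; exists x => //.
by apply/existsP; exists k; rewrite k_gt0 orbC.
Qed.

Hypothesis fusionG : fusion_controlled G.

Lemma conj_vertices_of_type V W T : isvert G V -> isvert G W ->
  has_type V T -> has_type W T -> exists2 y, y \in 'N(G) & W = V :^ y.
Proof.
case/isvertP => x xG [_ ->] /isvertP [z zG [_ ->]].
rewrite !has_type_gcls => /eqP <- /eqP /esym /ptype_eq_conjg [u xu].
have [y yN xy] : exists2 y, y \in 'N(G) & x ^ u = x ^ y by apply: fusionG; rewrite ?xu.
by exists y => //; rewrite gclsJ -xy xu.
Qed.

Lemma vertices_of_type W T : isvert G W -> has_type W T ->
  [set V | isvert G V & has_type V T] = W :^: 'N(G).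
Proof.
move=> vW tW; apply/setP => V; rewrite inE; apply/andP/imsetP => [[vV tV]|[y yN ->]].
  by have [y yN ->] := conj_vertices_of_type vW vV tW tV; exists y.
by split; [apply: isvertJ | apply: has_typeJ].
Qed.

End PowerGraph.

Section Component.
Variables (n : nat) (G : {group {perm 'I_n}}) (V0 : {set {perm 'I_n}}).
Hypothesis vV0 : isvert G V0.
Local Notation C := (Defs.comp G V0).
Local Open Scope group_scope.
Implicit Types (V W : {set {perm 'I_n}}) (y : {perm 'I_n}) (T : seq nat).

Lemma comp_isvert W : W \in C -> isvert G W.
Proof.
rewrite inE => /connectP [p V0p ->] {W}.
by elim: p V0 vV0 V0p => //= U p IHp V _ /andP [/and4P [_ vU _ _] Up]; apply: IHp.
Qed.

Lemma connect_comp V W : V \in C -> W \in C -> connect (padj G) V W.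
Proof.
by rewrite !inE => V0V; apply: connect_trans; rewrite (padj_connect_sym G).
Qed.

Lemma comp_root : V0 \in C.
Proof. by rewrite inE connect0. Qed.

Definition comp_stab := 'N_('N(G))(C | 'Js).

(* Conjugation by [y] is a graph automorphism, so it maps C onto the
   component of [W :^ y]. *)
Lemma normG_comp_stab y W : y \in 'N(G) -> W \in C -> W :^ y \in C -> y \in comp_stab.
Proof.
move=> yN WC WyC; apply/setIP; split => //; rewrite !inE /=; apply/subsetP => U UC; rewrite !inE.
rewrite inE in WyC; apply: connect_trans WyC _.
by apply: connect_padjJ => //; apply: connect_comp.
Qed.

Lemma comp_stab_norm W : W \in C -> 'N_comp_stab(W) = 'N_('N(G))(W).
Proof.
move=> WC; apply/setP => y; rewrite in_setI [RHS]in_setI; apply: andb_id2r => /normP WyW.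
apply/idP/idP => [/setIP [] // | yN].
by apply: (normG_comp_stab yN WC); rewrite WyW.
Qed.

Lemma kC_gt0 T : in_types C T -> 0 < kC C T.
Proof. by case=> W WC tW; apply/card_gt0P; exists W; rewrite inE WC. Qed.

Lemma kC_eq_kGP T :
  reflect (forall V, isvert G V -> has_type V T -> V \in C) (kC C T == kG G T).
Proof.
have sub : [set V in C | has_type V T] \subset [set V | isvert G V & has_type V T].
  by apply/subsetP => V /setIdP [VC tV]; rewrite inE (comp_isvert VC) tV.
apply: (iffP eqP) => [kCG V vV tV | allC].
  have allC := elimT (subset_cardP kCG) sub.
  by move: (allC V); rewrite !inE vV tV !andbT => ->.
apply: eq_card => V; rewrite [RHS]inE.
by apply/setIdP/andP => -[V1 tV]; split; rewrite // ?(comp_isvert V1) ?allC.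
Qed.

Hypothesis fusionG : fusion_controlled G.

Lemma comp_vertices_of_type W T : W \in C -> has_type W T ->
  [set V in C | has_type V T] = W :^: comp_stab.
Proof.
move=> WC tW; apply/setP => V; rewrite inE.
apply/andP/imsetP => [[VC tV]|[y /setIP [yN yC] ->]].
  have [y yN VE] := conj_vertices_of_type fusionG (comp_isvert WC) (comp_isvert VC) tW tV.
  by exists y => //; apply: (normG_comp_stab yN WC); rewrite -VE.
by split; [rewrite -(astabs_act _ yC) in WC | apply: has_typeJ].
Qed.

Lemma kG_mul_card_comp_stab T : in_types C T ->
  (kG G T * #|comp_stab| = kC C T * #|'N(G)|)%N.
Proof.
move=> [W WC tW].
have := card_orbit_stab 'Js comp_stab W; rewrite astab1Js comp_stab_norm // => <-.
have := card_orbit_stab 'Js 'N(G) W; rewrite astab1Js => <-.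
rewrite /kG /kC (vertices_of_type fusionG (comp_isvert WC) tW).
by rewrite (comp_vertices_of_type WC tW) mulnCA.
Qed.

Lemma comp_has_vtype V : V \in C -> has_type V (vtype V).
Proof. by move=> VC; rewrite (has_type_vtype _ (comp_isvert VC)). Qed.

Lemma comp_vtypeE V T : V \in C -> has_type V T -> vtype V = T.
Proof. by move=> VC; rewrite (has_type_vtype _ (comp_isvert VC)) => /eqP. Qed.

Lemma kC1_vtype_inj :
  (forall T, in_types C T -> kC C T = 1%N) <-> {in C &, injective vtype}.
Proof.
split => [kC1 V W VC WC VW | vinj T [W WC tW]].
  have tV := comp_has_vtype VC.
  have tW : has_type W (vtype V) by rewrite VW comp_has_vtype.
  have /eqP /cards1P [U UE] := kC1 _ (ex_intro2 _ _ V VC tV).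
  have : W \in [set U in C | has_type U (vtype V)] by apply/setIdP.
  have : V \in [set U in C | has_type U (vtype V)] by apply/setIdP.
  by rewrite UE => /set1P -> /set1P ->.
apply/eqP/cards1P; exists W; apply/setP => V; apply/setIdP/set1P => [[VC tV]|->] //.
by apply: vinj; rewrite // (comp_vtypeE VC tV) (comp_vtypeE WC tW).
Qed.

Lemma iso_tC_vtype_inj : iso_tC G C -> {in C &, injective vtype}.
Proof.
case=> f [finj fC _ _].
pose g V := odflt V [pick W in C | vtype W == f V].
have gP V : V \in C -> g V \in C /\ vtype (g V) = f V.
  move=> VC; rewrite /g; case: pickP => [W /andP [WC /eqP] //|none].
  have [W WC tW] := fC V VC.
  by have := none W; rewrite WC (comp_vtypeE WC tW) eqxx.
have ginj : {in C &, injective g}.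
  by move=> V V' VC V'C gVV'; apply: finj; rewrite // -(gP V VC).2 -(gP V' V'C).2 gVV'.
have gC : g @: C = C.
  apply/eqP; rewrite eqEcard card_in_imset // leqnn andbT.
  by apply/subsetP => _ /imsetP [V VC ->]; apply: (gP V VC).1.
move=> W W'; rewrite -{1 2}gC => /imsetP [V VC ->] /imsetP [V' V'C ->] tVV'.
by congr g; apply: finj; rewrite // -(gP V VC).2 -(gP V' V'C).2.
Qed.

Lemma vtype_inj_iso_tC : {in C &, injective vtype} -> iso_tC G C.
Proof.
move=> vinj; exists vtype; split => // [V VC | T [V VC tV] | V W VC WC].
- by exists V; rewrite ?comp_has_vtype.
- by exists V; rewrite // (comp_vtypeE VC tV).
split => [VW | [_ [V' [W' [V'C W'C V'W' tV' tW']]]]].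
  split; last by exists V, W; split; rewrite ?comp_has_vtype.
  case/and4P: VW => _ _ VneW /exists_inP [x xV /exists_inP [z zW /existsP [k /andP [k_gt0 xz]]]].
  split; first by move=> /(vinj _ _ VC WC) VW; rewrite VW eqxx in VneW.
  exists k => //; rewrite (vtype_mem (comp_isvert VC) xV) (vtype_mem (comp_isvert WC) zW).
  by case/orP: xz => /eqP ->; [left | right]; apply: ptype_expg.
by rewrite -(vinj V' V V'C VC (comp_vtypeE V'C tV')) -(vinj W' W W'C WC (comp_vtypeE W'C tW')).
Qed.

End Component.

Section Main.
Variables (n : nat) (G : {group {perm 'I_n}}) (V0 : {set {perm 'I_n}}).
Hypotheses (fusionG : fusion_controlled G) (vV0 : isvert G V0).
Local Notation C := (Defs.comp G V0).

Lemma kG_div_kC T : in_types C T ->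
  ((kG G T)%:R / (kC C T)%:R = #|'N(G)%g|%:R / #|comp_stab G V0|%:R :> rat)%R.
Proof.
move=> tT; apply/eqP; rewrite eqr_div ?pnatr_eq0 -?lt0n ?kC_gt0 ?cardG_gt0 //.
by rewrite -!natrM eqr_nat (kG_mul_card_comp_stab vV0 fusionG tT) mulnC.
Qed.

Lemma iso_tC_kC1 : iso_tC G C <-> forall T, in_types C T -> kC C T = 1.
Proof.
have [kC1_inj inj_kC1] := kC1_vtype_inj vV0.
by split => [/(iso_tC_vtype_inj vV0)/inj_kC1 | /kC1_inj/(vtype_inj_iso_tC vV0)].
Qed.

End Main.

Theorem corollary6p7 (n : nat) (G : {group {perm 'I_n}}) (C : {set {set {perm 'I_n}}}) :
  fusion_controlled G -> is_component G C ->
  [/\ (forall T T', in_types C T -> in_types C T' ->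
         ((kG G T)%:R / (kC C T)%:R = (kG G T')%:R / (kC C T')%:R :> rat)%R),
      (iso_tC G C <->
         exists2 T, in_types C T &
           kC C T = 1 /\ forall T', in_types C T' -> kG G T = kG G T'),
      ((exists2 T, in_types C T &
          forall V, isvert G V -> has_type V T -> V \in C) ->
       forall T', in_types C T' ->
          forall V, isvert G V -> has_type V T' -> V \in C) &
      ((exists2 T, in_types C T & kC C T = kG G T /\ 1 < kG G T) -> ~ iso_tC G C)].
Proof.
move=> fusionG [V0 vV0 ->].
have cross := kG_mul_card_comp_stab vV0 fusionG.
have [N_gt0 S_gt0] := (cardG_gt0 'N(G), cardG_gt0 (comp_stab G V0)).
have tV0 : in_types (Defs.comp G V0) (vtype V0).
  by exists V0; [exact: comp_root | exact: (comp_has_vtype vV0 (comp_root G V0))].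
split.
- by move=> T T' tT tT'; rewrite !(kG_div_kC fusionG vV0).
- apply: iff_trans (iso_tC_kC1 vV0) _; split => [kC1 | [T tT [kCT kGT]] T' tT'].
    exists (vtype V0) => //; split => [|T' tT']; first exact: kC1.
    by apply/eqP; rewrite -(eqn_pmul2r S_gt0) !cross ?kC1.
  by apply/eqP; rewrite -(eqn_pmul2r N_gt0) -cross // -(kGT T' tT') cross // kCT.
- move=> [T tT /(kC_eq_kGP vV0) kCT] T' tT'; apply/(kC_eq_kGP vV0).
  have kG_gt0 : 0 < kG G T by rewrite -(eqP kCT) kC_gt0.
  have SN : #|comp_stab G V0| = #|'N(G)%g|.
    by apply/eqP; rewrite -(eqn_pmul2l kG_gt0) cross // (eqP kCT).
  by rewrite -(eqn_pmul2r N_gt0) -cross // SN.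
- move=> [T tT [<- kC_gt1]] /(iso_tC_kC1 vV0) /(_ T tT) kC1.
  by rewrite kC1 in kC_gt1.
Qed.
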